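(* Let $V$ be a $2$-dimensional real vector space. For every $T\in\widetilde C_1$, the isotropy subgroup $\{g\in\mathrm{Gl}(V): g\cdot T=T\}$ has dimension at least $1$. Equivalently, on a $2$-dimensional manifold every $1$-jet at $x$ of a symmetric linear connection has an isotropy group of dimension at least $1$ for the action of $\mathrm{Diff}_x$ on $\widetilde{\mathfrak{C}}^1_2\cong\widetilde C_1/\mathrm{Gl}_2$.
   Context: $\widetilde C_1$ is the space of $(1,3)$-tensors $\Gamma^k_{ijl}$ on $V$ symmetric in $i,j$ whose symmetrization over the three covariant indices vanishes, with the standard tensorial action of $\mathrm{Gl}(V)$. (It corresponds to the space of first normal tensors $\Gamma^1_x$ of symmetric linear connections: in a normal chart $(\Gamma^1_x)^k_{ijl}=\partial_l\Gamma^k_{ij}(0)$.) $\mathrm{Diff}_x$ is the group of germs of diffeomorphisms fixing $x$, acting on connections by $(\tau\cdot\nabla)_D\bar D=\tau_*^{-1}(\nabla_{\tau_*D}\tau_*\bar D)$. *)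

From Stdlib Require Import Reals.
Open Scope R_scope.

(* V = R^2 with a fixed basis; indices range over a two-element type. *)
Inductive I2 : Type := e1 | e2.

Definition sum2 (f : I2 -> R) : R := f e1 + f e2.

(* Endomorphisms of V as 2x2 matrices: g k a = g^k_a. *)
Definition Mat := I2 -> I2 -> R.

Definition idm : Mat := fun i j => match i, j with
  | e1, e1 => 1 | e2, e2 => 1 | _, _ => 0 end.

Definition mmul (A B : Mat) : Mat := fun i j => sum2 (fun a => A i a * B a j).

Definition det2 (g : Mat) : R := g e1 e1 * g e2 e2 - g e1 e2 * g e2 e1.

(* inverse of a 2x2 matrix (meaningful when det2 g <> 0) *)
Definition inv2 (g : Mat) : Mat := fun i j =>
  match i, j with
  | e1, e1 => g e2 e2 / det2 g
  | e1, e2 => - g e1 e2 / det2 g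
  | e2, e1 => - g e2 e1 / det2 g
  | e2, e2 => g e1 e1 / det2 g
  end.

Definition in_GL (g : Mat) : Prop := det2 g <> 0.

(* (1,3)-tensors: T k i j l = T^k_{ijl} *)
Definition Tensor13 := I2 -> I2 -> I2 -> I2 -> R.

Definition in_Ctilde1 (T : Tensor13) : Prop :=
  (forall k i j l, T k i j l = T k j i l) /\
  (forall k i j l,
     T k i j l + T k i l j + T k j i l + T k j l i + T k l i j + T k l j i = 0).

Definition act (g : Mat) (T : Tensor13) : Tensor13 := fun k i j l =>
  sum2 (fun a => sum2 (fun b => sum2 (fun c => sum2 (fun d =>
    g k a * T a b c d * inv2 g b i * inv2 g c j * inv2 g d l)))).

Definition one_param_subgroup (phi : R -> Mat) : Prop :=
  (forall t, in_GL (phi t)) /\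
  (forall s t, phi (s + t) = mmul (phi s) (phi t)) /\
  (forall i j, continuity (fun t => phi t i j)).

(* A closed subgroup H of Gl(V) (given by its membership predicate) has
   dimension >= 1 iff its Lie algebra {A | exp(tA) in H for all t} is nonzero,
   i.e. iff H contains a nontrivial one-parameter subgroup. *)
Definition dim_ge1 (H : Mat -> Prop) : Prop :=
  exists phi : R -> Mat, one_param_subgroup phi /\
    (exists t i j, phi t i j <> idm i j) /\
    (forall t, H (phi t)).

Definition isotropy (T : Tensor13) : Mat -> Prop :=
  fun g => in_GL g /\ act g T = T.

(** In two dimensions an element of [C~_1] is determined by four numbers
    [p0 q0 p1 q1], and a direct computation shows that every matrix commuting
    with the traceless matrix [A] of rows [[p0 + q1, -2 q0], [2 p1, -(p0 + q1)]]
    rescales such a tensor by the inverse of its determinant.  Hence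
    [t |-> exp (t A)], which has determinant one, lies in the isotropy group.
    If [A = 0] the tensor is built from the area form of [V], so the whole of
    [Sl(V)] fixes it and any one-parameter subgroup of [Sl(V)] will do. *)

From Stdlib Require Import Reals Lra Classical FunctionalExtensionality.
Open Scope R_scope.

Lemma tensor_ext (T U : Tensor13) : (forall k i j l, T k i j l = U k i j l) -> T = U.
Proof.
intro Heq; do 4 (apply functional_extensionality_dep; intro).
apply Heq.
Qed.

Definition canonical_tensor (p0 q0 p1 q1 : R) : Tensor13 := fun k i j l =>
  let p := match k with e1 => p0 | e2 => p1 end in
  let q := match k with e1 => q0 | e2 => q1 end in
  match i, j, l with
  | e1, e1, e1 => 0 | e2, e2, e2 => 0
  | e2, e1, e1 => p | e1, e2, e1 => p | e1, e1, e2 => -2 * p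
  | e1, e2, e2 => q | e2, e1, e2 => q | e2, e2, e1 => -2 * q
  end.

Lemma Ctilde1_canonical T : in_Ctilde1 T ->
  T = canonical_tensor (T e1 e2 e1 e1) (T e1 e1 e2 e2) (T e2 e2 e1 e1) (T e2 e1 e2 e2).
Proof.
intros [Hsym Hcyc]; apply tensor_ext; intros k i j l.
pose proof (Hsym k e1 e2 e1); pose proof (Hsym k e1 e2 e2).
pose proof (Hcyc k e1 e1 e1); pose proof (Hcyc k e2 e2 e2).
pose proof (Hcyc k e1 e1 e2); pose proof (Hcyc k e2 e2 e1).
destruct k, i, j, l; simpl; lra.
Qed.

(** [pencil a b c x y] is [x 1 + y A] with [A] of rows [[a, b], [c, -a]];
    since [A ^ 2 = (a ^ 2 + b c) 1] these matrices form a commutative algebra. *)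
Definition pencil (a b c x y : R) : Mat := fun i j =>
  match i, j with
  | e1, e1 => x + y * a | e1, e2 => y * b | e2, e1 => y * c | e2, e2 => x - y * a
  end.

Lemma det_pencil a b c x y : det2 (pencil a b c x y) = x * x - (a * a + b * c) * (y * y).
Proof. unfold det2, pencil; ring. Qed.

Lemma mmul_pencil a b c x1 y1 x2 y2 :
  mmul (pencil a b c x1 y1) (pencil a b c x2 y2) =
  pencil a b c (x1 * x2 + (a * a + b * c) * (y1 * y2)) (x1 * y2 + y1 * x2).
Proof.
apply functional_extensionality; intro i; apply functional_extensionality; intro j.
destruct i, j; unfold mmul, sum2, pencil; ring.
Qed.

Lemma pencil_neq_idm a b c x y :
  ~ (a = 0 /\ b = 0 /\ c = 0) -> y <> 0 -> exists i j, pencil a b c x y i j <> idm i j.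
Proof.
intros Habc Hy.
destruct (Req_dec (y * b) 0) as [Hb|Hb]; [|now exists e1, e2].
destruct (Req_dec (y * c) 0) as [Hc|Hc]; [|now exists e2, e1].
destruct (Req_dec (x + y * a) 1) as [Ha|Ha]; [|now exists e1, e1].
exists e2, e2; simpl; intro Hd.
assert (Hya : y * a = 0) by lra.
apply Rmult_integral in Hya, Hb, Hc.
apply Habc; repeat split; lra.
Qed.

Lemma continuity_pencil a b c (x y : R -> R) :
  continuity x -> continuity y -> forall i j, continuity (fun t => pencil a b c (x t) (y t) i j).
Proof.
intros Hx Hy i j.
assert (Hyk : forall k, continuity (fun t => y t * k)).
{ intro k; apply continuity_mult; [exact Hy | apply continuity_const; now intros ? ?]. }
destruct i, j; simpl; [apply continuity_plus | | | apply continuity_minus]; auto.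
Qed.

(** [t |-> cf t 1 + sf t A] is [exp (t A)] for any matrix with [A ^ 2 = d 1]. *)
Definition generalized_cos_sin (d : R) (cf sf : R -> R) : Prop :=
  continuity cf /\ continuity sf /\
  (forall t, cf t * cf t - d * (sf t * sf t) = 1) /\
  (forall s t, cf (s + t) = cf s * cf t + d * (sf s * sf t)) /\
  (forall s t, sf (s + t) = cf s * sf t + sf s * cf t) /\
  (exists t, sf t <> 0).

Lemma generalized_cos_sin_neg d : d < 0 ->
  let w := sqrt (- d) in generalized_cos_sin d (fun t => cos (w * t)) (fun t => sin (w * t) / w).
Proof.
intros Hd w.
assert (Hw : 0 < w) by (apply sqrt_lt_R0; lra).
assert (Hww : d = - (w * w)) by (unfold w; rewrite sqrt_sqrt; lra).
rewrite Hww; repeat split.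
- apply derivable_continuous; reg.
- apply derivable_continuous; reg.
- intro t; pose proof (sin2_cos2 (w * t)) as Hpyth; unfold Rsqr in Hpyth.
  rewrite <- Hpyth; field; lra.
- intros s t; rewrite Rmult_plus_distr_l, cos_plus; field; lra.
- intros s t; rewrite Rmult_plus_distr_l, sin_plus; field; lra.
- exists (PI / 2 / w).
  replace (w * (PI / 2 / w)) with (PI / 2) by (field; lra).
  rewrite sin_PI2, Rdiv_1_l; apply Rinv_neq_0_compat; lra.
Qed.

Lemma generalized_cos_sin_zero : generalized_cos_sin 0 (fun _ => 1) (fun t => t).
Proof.
repeat split.
- apply continuity_const; now intros ? ?.
- exact (derivable_continuous _ derivable_id).
- intro t; ring.
- intros s t; ring.
- intros s t; ring.
- exists 1; lra.
Qed.

Lemma generalized_cos_sin_pos d : 0 < d ->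
  let w := sqrt d in generalized_cos_sin d (fun t => cosh (w * t)) (fun t => sinh (w * t) / w).
Proof.
intros Hd w.
assert (Hw : 0 < w) by (apply sqrt_lt_R0; lra).
assert (Hww : d = w * w) by (unfold w; rewrite sqrt_sqrt; lra).
assert (Hexp : forall t, exp t * exp (- t) = 1).
{ intro t; rewrite <- exp_plus, Rplus_opp_r; exact exp_0. }
rewrite Hww; unfold cosh, sinh; repeat split.
- apply derivable_continuous; reg.
- apply derivable_continuous; reg.
- intro t; rewrite <- (Hexp (w * t)); field; lra.
- intros s t; rewrite Rmult_plus_distr_l, Ropp_plus_distr, !exp_plus; field; lra.
- intros s t; rewrite Rmult_plus_distr_l, Ropp_plus_distr, !exp_plus; field; lra.
- exists 1; rewrite Rmult_1_r; intro Hsinh.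
  assert (exp (- w) < exp w) by (apply exp_increasing; lra).
  apply Rmult_integral in Hsinh as [Hsinh|Hsinh]; [lra|].
  revert Hsinh; apply Rinv_neq_0_compat; lra.
Qed.

Lemma exists_generalized_cos_sin d : exists cf sf, generalized_cos_sin d cf sf.
Proof.
destruct (Rtotal_order d 0) as [Hd|[->|Hd]].
- exact (ex_intro _ _ (ex_intro _ _ (generalized_cos_sin_neg d Hd))).
- exact (ex_intro _ _ (ex_intro _ _ generalized_cos_sin_zero)).
- exact (ex_intro _ _ (ex_intro _ _ (generalized_cos_sin_pos d Hd))).
Qed.

Lemma dim_ge1_pencil (H : Mat -> Prop) a b c :
  ~ (a = 0 /\ b = 0 /\ c = 0) ->
  (forall x y, det2 (pencil a b c x y) = 1 -> H (pencil a b c x y)) ->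
  dim_ge1 H.
Proof.
intros Habc HH.
destruct (exists_generalized_cos_sin (a * a + b * c))
  as (cf & sf & Hcf & Hsf & Hpyth & Hcos_add & Hsin_add & t0 & Ht0).
assert (Hdet : forall t, det2 (pencil a b c (cf t) (sf t)) = 1)
  by (intro t; rewrite det_pencil; apply Hpyth).
exists (fun t => pencil a b c (cf t) (sf t)); repeat split.
- intro t; unfold in_GL; rewrite Hdet; lra.
- intros s t; rewrite mmul_pencil, Hcos_add, Hsin_add; reflexivity.
- now apply continuity_pencil.
- exists t0; now apply pencil_neq_idm.
- intro t; apply HH, Hdet.
Qed.

Lemma act_pencil_canonical p0 q0 p1 q1 x y :
  let g := pencil (p0 + q1) (-2 * q0) (2 * p1) x y in
  in_GL g ->
  act g (canonical_tensor p0 q0 p1 q1) =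
  fun k i j l => canonical_tensor p0 q0 p1 q1 k i j l / det2 g.
Proof.
intros g Hg; unfold in_GL, g, det2 in *; apply tensor_ext; intros k i j l.
unfold act, sum2, inv2, det2.
destruct k, i, j, l; simpl; field; exact Hg.
Qed.

(** [canonical_tensor p 0 0 (-p)] is [-p (delta^k_i w_jl + delta^k_j w_il)]
    for the area form [w], whence its relative invariance under all of [Gl(V)]. *)
Lemma act_area_form_tensor p g : in_GL g ->
  act g (canonical_tensor p 0 0 (- p)) =
  fun k i j l => canonical_tensor p 0 0 (- p) k i j l / det2 g.
Proof.
intro Hg; unfold in_GL, det2 in *; apply tensor_ext; intros k i j l.
unfold act, sum2, inv2, det2.
destruct k, i, j, l; simpl; field; exact Hg.
Qed.

Lemma isotropy_of_act_det T g :
  det2 g = 1 -> act g T = (fun k i j l => T k i j l / det2 g) -> isotropy T g.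
Proof.
intros Hdet Hact; split; [unfold in_GL; lra|].
rewrite Hact, Hdet; apply tensor_ext; intros k i j l; apply Rdiv_1_r.
Qed.

Theorem mainTheorem12 (T : Tensor13) (HT : in_Ctilde1 T) :
  dim_ge1 (isotropy T).
Proof.
rewrite (Ctilde1_canonical T HT).
generalize (T e1 e2 e1 e1) (T e1 e1 e2 e2) (T e2 e2 e1 e1) (T e2 e1 e2 e2).
intros p0 q0 p1 q1.
destruct (classic (p0 + q1 = 0 /\ q0 = 0 /\ p1 = 0)) as [(Ha & Hb & Hc)|Hnz].
- replace (canonical_tensor p0 q0 p1 q1) with (canonical_tensor p0 0 0 (- p0))
    by (f_equal; lra).
  apply (dim_ge1_pencil _ 1 0 0); [lra|].
  intros x y Hdet; apply isotropy_of_act_det; [exact Hdet|].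
  apply act_area_form_tensor; unfold in_GL; lra.
- apply (dim_ge1_pencil _ (p0 + q1) (-2 * q0) (2 * p1)); [intros (? & ? & ?); lra|].
  intros x y Hdet; apply isotropy_of_act_det; [exact Hdet|].
  apply act_pencil_canonical; unfold in_GL; lra.
Qed.
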